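(* Let $\mathcal{S}$ be an abstract numeration system built on a tree language with a purely periodic labeled signature. The set of $\mathcal{S}$-automatic sequences is stable under finite modifications: if $\mathbf{x}$ is $\mathcal{S}$-automatic and $\mathbf{y}$ is an infinite word over a finite alphabet that differs from $\mathbf{x}$ in only finitely many positions, then $\mathbf{y}$ is $\mathcal{S}$-automatic.
   Context: An abstract numeration system is a triple $\mathcal{S}=(L,C,<)$ with $L$ an infinite language over a totally ordered finite alphabet $C$; $\mathrm{rep}_{\mathcal{S}}(n)$ is the $(n+1)$st word of $L$ in radix order (shorter first, then lexicographic). $\mathbf{x}$ over $B$ is $\mathcal{S}$-automatic if there is a deterministic finite automaton with output $(Q,q_0,C,\delta,\mu:Q\to B)$ with $x_n=\mu(\delta(q_0,\mathrm{rep}_{\mathcal{S}}(n)))$ for all $n$. A purely periodic labeled signature over $C$ (smallest letter $0$) is a sequence $(s_n)_{n\ge0}$ with $s_n=w_{n\bmod r}$, each $w_i$ having strictly increasing letters and $w_0=0y$ with $y$ non-empty. It generates an infinite labeled tree: nodes $v_0,v_1,\ldots$ are created in breadth-first order; $v_0$ is the root; the children of $v_n$ are reached by edges labeled by the letters of $s_n$ in increasing order, new children receiving the next unused indices; for the root, the edge labeled $0$ is a loop to $v_0$ and the other letters of $s_0$ lead to $v_1,\ldots,v_{|s_0|-1}$. The tree language $L(\mathsf{s})$ is the set of labels of paths from the root not starting with $0$; $\mathcal{S}=(L(\mathsf{s}),C,<)$. *)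

From mathcomp Require Import all_boot.
Set Implicit Arguments. Unset Strict Implicit. Unset Printing Implicit Defensive.

(* Purely periodic labeled signature given by the period words w_0..w_{r-1}. *)
Definition strictly_increasing (k : nat) (u : seq 'I_k) : bool :=
  sorted (fun a b : 'I_k => (val a < val b)%N) u.

Definition purely_periodic_signature (k : nat) (ws : seq (seq 'I_k)) : Prop :=
  (0 < size ws)%N /\
  (forall i, (i < size ws)%N -> strictly_increasing (nth [::] ws i)) /\
  exists (z : 'I_k) (y : seq 'I_k),
    nth [::] ws 0 = z :: y /\ val z = 0%N /\ y != [::].

Definition sig_at (k : nat) (ws : seq (seq 'I_k)) (n : nat) : seq 'I_k :=
  nth [::] ws (n %% size ws).

(* number of new children created by node v_j (root: the 0-loop is not new) *)
Definition nchildren (k : nat) (ws : seq (seq 'I_k)) (j : nat) : nat :=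
  if j == 0%N then (size (sig_at ws 0)).-1 else size (sig_at ws j).

(* index of the first child of v_n, n >= 1 (breadth-first numbering) *)
Definition first_child (k : nat) (ws : seq (seq 'I_k)) (n : nat) : nat :=
  (1 + \sum_(j < n) nchildren ws j)%N.

Definition tree_edge (k : nat) (ws : seq (seq 'I_k)) (n : nat) (a : 'I_k)
  : option nat :=
  let s := sig_at ws n in
  let i := index a s in
  if (size s <= i)%N then None
  else if n == 0%N then Some i  (* i = 0 is the loop to v_0; i >= 1 gives v_i *)
  else Some (first_child ws n + i)%N.

Definition tree_run (k : nat) (ws : seq (seq 'I_k)) (w : seq 'I_k)
  : option nat :=
  foldl (fun o a => if o is Some n then tree_edge ws n a else None) (Some 0%N) w.

Definition tree_language (k : nat) (ws : seq (seq 'I_k)) (w : seq 'I_k) : bool :=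
  (if w is a :: _ then val a != 0%N else true) && (tree_run ws w != None).

Definition infinite_language (k : nat) (L : seq 'I_k -> bool) : Prop :=
  ~ exists s : seq (seq 'I_k), forall w, L w -> w \in s.

Fixpoint lex_lt (k : nat) (u v : seq 'I_k) : bool :=
  match u, v with
  | [::], _ :: _ => true
  | a :: u', b :: v' => ((val a < val b)%N) || ((val a == val b) && lex_lt u' v')
  | _, _ => false
  end.

Definition radix_lt (k : nat) (u v : seq 'I_k) : bool :=
  (size u < size v)%N || ((size u == size v) && lex_lt u v).

(* rep_S(n) = w : w is the (n+1)-st word of L in radix order, i.e.
   w \in L and exactly n words of L are radix-smaller than w *)
Definition is_rep (k : nat) (L : seq 'I_k -> bool) (n : nat) (w : seq 'I_k)
  : Prop :=
  L w /\ exists s : seq (seq 'I_k),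
    [/\ uniq s, size s = n & forall u, u \in s <-> (L u /\ radix_lt u w)].

Definition S_automatic (k : nat) (L : seq 'I_k -> bool) (B : Type)
  (x : nat -> B) : Prop :=
  exists (Q : finType) (q0 : Q) (delta : Q -> 'I_k -> Q) (mu : Q -> B),
    forall n w, is_rep L n w -> x n = mu (foldl delta q0 w).

From mathcomp Require Import all_boot all_order.
From Stdlib Require Import ClassicalEpsilon.
Set Implicit Arguments. Unset Strict Implicit. Unset Printing Implicit Defensive.
Import Order.TTheory.

(* Only finitely many integers n < N are changed, and their representations
   rep(n) have bounded length M.  Run, alongside the automaton for x, a second
   finite automaton that remembers the word read so far as long as its length
   is at most M; on such a word w the output is overridden by y (rank w), where
   rank is the inverse of rep.  Nothing about the tree language is used: the
   argument works for every abstract numeration system. *)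

Section RadixOrder.
Variable k : nat.

Definition radix_key (u : seq 'I_k) : nat *l seqlexi 'I_k := (size u, u).

Lemma lex_ltE (u v : seq 'I_k) : lex_lt u v = (u < v :> seqlexi 'I_k)%O.
Proof.
elim: u v => [|a u IH] [|b v] //=.
by rewrite ltxi_cons IH leEord; case: ltngtP.
Qed.

Lemma radix_ltE (u v : seq 'I_k) : radix_lt u v = (radix_key u < radix_key v)%O.
Proof. by rewrite /radix_lt lex_ltE ltxi_pair leEnat; case: ltngtP. Qed.

Lemma radix_key_inj : injective radix_key.
Proof. by move=> u v [_ ->]. Qed.

End RadixOrder.

Section Representations.
Variables (k : nat) (L : seq 'I_k -> bool).

Lemma is_rep_inj n n' w : is_rep L n w -> is_rep L n' w -> n = n'.
Proof.
move=> [_ [s [us <- Hs]]] [_ [s' [us' <- Hs']]].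
apply/eqP; rewrite eqn_leq; apply/andP; split; apply: uniq_leq_size => // u.
  by move/Hs/Hs'.
by move/Hs'/Hs.
Qed.

Lemma is_rep_fun n w w' : is_rep L n w -> is_rep L n w' -> w = w'.
Proof.
wlog lt_ww' : w w' / radix_lt w w'.
  move=> wlog_lt rep_w rep_w'; case: (eqVneq w w') => // ne_ww'.
  have /lt_total : radix_key w != radix_key w' by apply: contra_neq ne_ww'; apply: radix_key_inj.
  by rewrite -!radix_ltE => /orP[/wlog_lt/(_ rep_w rep_w') | /wlog_lt/(_ rep_w' rep_w)->].
move=> [Lw [s [us <- Hs]]] [_ [s' [_ ss' Hs']]]; exfalso.
have w_notin_s : w \notin s by apply/negP => /Hs[_]; rewrite radix_ltE ltxx.
have : size (w :: s) <= size s'.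
  apply: uniq_leq_size => [|u]; first by rewrite /= w_notin_s.
  rewrite inE => /predU1P[->|/Hs[Lu lt_uw]]; apply/Hs'; split=> //.
  by move: lt_uw lt_ww'; rewrite !radix_ltE; apply: lt_trans.
by rewrite ss' ltnn.
Qed.

Lemma is_rep_size_bounded N :
  exists M, forall n w, n < N -> is_rep L n w -> size w <= M.
Proof.
elim: N => [|N [M bounded_M]]; first by exists 0.
have [[wN rep_wN] | no_rep] := classic (exists w, is_rep L N w).
  exists (maxn M (size wN)) => n w; rewrite ltnS leq_eqVlt => /predU1P[-> rep_w|lt_nN rep_w].
    by rewrite (is_rep_fun rep_w rep_wN) leq_maxr.
  exact: leq_trans (bounded_M _ _ lt_nN rep_w) (leq_maxl _ _).
exists M => n w; rewrite ltnS leq_eqVlt => /predU1P[-> rep_w|lt_nN]; last exact: bounded_M.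
by case: no_rep; exists w.
Qed.

Definition rank (w : seq 'I_k) : nat := epsilon (inhabits 0) (fun n => is_rep L n w).

Lemma rankP n w : is_rep L n w -> rank w = n.
Proof.
move=> rep_w.
have rep_rank : is_rep L (rank w) w.
  exact: (epsilon_spec _ (fun m => is_rep L m w) (ex_intro _ n rep_w)).
exact: is_rep_inj rep_rank rep_w.
Qed.

End Representations.

Section ShortWords.
Variables (k M : nat).

Definition words_upto : seq (seq 'I_k) :=
  flatten [seq [seq val t | t : m.-tuple 'I_k] | m <- iota 0 M.+1].

Lemma mem_words_upto w : (w \in words_upto) = (size w <= M).
Proof.
apply/flatten_mapP/idP => [[m] | size_w].
  by rewrite mem_iota ltnS => /andP[_ le_mM] /mapP[t _ ->]; rewrite size_tuple.
exists (size w); first by rewrite mem_iota ltnS.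
by apply/mapP; exists (in_tuple w); rewrite ?mem_enum.
Qed.

Definition short_word := seq_sub words_upto.

Definition extend (o : option short_word) (a : 'I_k) : option short_word :=
  obind (fun u => insub (rcons (val u) a)) o.

Lemma extend_insub v a : extend (insub v) a = insub (rcons v a).
Proof.
case: (insubP _ v) => [u _ <- // | long_v] /=.
rewrite insubN // mem_words_upto size_rcons -ltnNge.
by rewrite mem_words_upto -ltnNge in long_v; apply: ltnW.
Qed.

Lemma foldl_extend v w : foldl extend (insub v) w = insub (v ++ w).
Proof.
elim: w v => [|a w IH] v; first by rewrite cats0.
by rewrite /= extend_insub IH cat_rcons.
Qed.

End ShortWords.

Arguments extend {k M}.

Lemma S_automatic_override k (L : seq 'I_k -> bool) (B : Type) (x y : nat -> B)
    (M : nat) (h : seq 'I_k -> option B) :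
  S_automatic L x -> (forall w, M < size w -> h w = None) ->
  (forall n w, is_rep L n w -> y n = odflt (x n) (h w)) ->
  S_automatic L y.
Proof.
move=> [Q [q0 [delta [mu x_out]]]] h_long y_out.
pose delta' (p : Q * option (short_word k M)) a := (delta p.1 a, extend p.2 a).
pose mu' (p : Q * option (short_word k M)) := odflt (mu p.1) (obind (h \o val) p.2).
exists (Q * option (short_word k M))%type, (q0, insub [::]), delta', mu'.
have run p w : foldl delta' p w = (foldl delta p.1 w, foldl extend p.2 w).
  by elim: w p => [[]|a w IH p] //=; rewrite IH.
move=> n w rep_w; rewrite run /= foldl_extend /mu' (y_out _ _ rep_w) (x_out _ _ rep_w) /=.
case: insubP => [u _ <- // | long_w] /=.
by rewrite h_long // ltnNge -mem_words_upto.
Qed.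

Theorem mainTheorem14 (k : nat) (ws : seq (seq 'I_k))
  (Hsig : purely_periodic_signature ws)
  (Hinf : infinite_language (tree_language ws))
  (B : finType) (x y : nat -> B)
  (Hx : S_automatic (tree_language ws) x)
  (Hfin : exists N, forall n, (N <= n)%N -> x n = y n) :
  S_automatic (tree_language ws) y.
Proof.
set L := tree_language ws.
have [N x_eq_y] := Hfin.
have [M rep_short] := is_rep_size_bounded L N.
pose h w := if size w <= M then Some (y (rank L w)) else None.
apply: (S_automatic_override (M := M) (h := h) Hx) => [w long_w | n w rep_w]; rewrite /h.
  by rewrite leqNgt long_w.
case: leqP => [_ | long_w] /=; first by rewrite (rankP rep_w).
apply/esym/x_eq_y; rewrite leqNgt; apply/negP => /rep_short/(_ rep_w).
by rewrite leqNgt long_w.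
Qed.
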